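(* Let $N\ge1$. Let $f_{\mathrm{prod}}:\mathbb{N}^N\to\mathbb{N}$ be $f_{\mathrm{prod}}(\mathbf{s})=s_1s_2\cdots s_N$, and let $g:\mathbb{N}^N\to\mathbb{N}$ be the indicator function of $\{1,2\}^N=\{(s_1,\dots,s_N): s_i\in\{1,2\}\}$. Then for every integer $\ell>0$, $$c_{f_{\mathrm{prod}}}(\ell\mathbf{1})=c_g((2\ell-1)\mathbf{1}),$$ where $\mathbf{1}=(1,\dots,1)\in\mathbb{N}^N$.
   Context: $\mathbb{N}=\{0,1,2,\dots\}$. For $h:\mathbb{N}^N\to\mathbb{N}$ with $h(\mathbf{0})=0$, $k\ge0$ and $\mathbf{x}\in\mathbb{N}^N$, $\binom{k}{\mathbf{x}}_h=\sum_{\mathbf{m}_1+\cdots+\mathbf{m}_k=\mathbf{x}} h(\mathbf{m}_1)\cdots h(\mathbf{m}_k)$ over tuples of vectors in $\mathbb{N}^N$, and $c_h(\mathbf{x})=\sum_{k\ge0}\binom{k}{\mathbf{x}}_h$ (the number of $h$-weighted vector compositions of $\mathbf{x}$, where a part $\mathbf{m}$ can take one of $h(\mathbf{m})$ colors). *)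

From mathcomp Require Import all_boot.
Set Implicit Arguments. Unset Strict Implicit. Unset Printing Implicit Defensive.

Definition vec (n : nat) := 'I_n -> nat.

Definition vtot n (x : vec n) : nat := \sum_(i < n) x i.

Definition vle n (m x : vec n) : bool := [forall i, m i <= x i].

Definition vconst n (c : nat) : vec n := fun _ => c.

(* binom k x h = sum over (m_1,...,m_k) with m_1+...+m_k = x of
   h(m_1)...h(m_k).  The finite index
   {ffun 'I_n -> 'I_(vtot x).+1} covers every m <= x. *)
Fixpoint hbinom n (h : vec n -> nat) (k : nat) (x : vec n) : nat :=
  match k with
  | 0 => [forall i, x i == 0]
  | k'.+1 => \sum_(m : {ffun 'I_n -> 'I_(vtot x).+1}
                   | vle (fun i => nat_of_ord (m i)) x)
               h (fun i => nat_of_ord (m i)) *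
               hbinom h k' (fun i => x i - m i)
  end.

(* c_h(x) = sum_{k >= 0} binom k x h.  Under the standing assumption
   h(0) = 0, every term with k > |x| (total size) vanishes, since some
   part m_j must be 0; so the series is the finite sum below. *)
Definition comp_count n (h : vec n -> nat) (x : vec n) : nat :=
  \sum_(k < (vtot x).+2) hbinom h k x.

Definition f_prod n : vec n -> nat := fun s => \prod_(i < n) s i.

Definition g_ind n : vec n -> nat :=
  fun s => [forall i, (s i == 1) || (s i == 2)].

From mathcomp Require Import all_boot.
From mathcomp Require Import zify.

(* Both weights are products of one-variable weights [w], so the number of
   k-part compositions of [c * 1] in dimension N is the N-th power of the
   one-dimensional count [wcomp w k c].  For [w j = j] this count is
   [C(l + j - 1, 2j - 1)], and for the indicator of {1, 2} it is
   [C(k, n - k)].  Hence the j-th term of the left-hand sum equals the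
   (l - 1 + j)-th term of the right-hand one, and every other term of
   either sum vanishes. *)

Fixpoint wcomp (w : nat -> nat) (k n : nat) : nat :=
  match k with
  | 0 => n == 0
  | k'.+1 => \sum_(j < n.+1) w j * wcomp w k' (n - j)
  end.

Lemma wcompS w k n :
  wcomp w k.+1 n = \sum_(j < n.+1) w j * wcomp w k (n - j).
Proof. by []. Qed.

Lemma nat_forallE n (P : pred 'I_n) :
  nat_of_bool [forall i, P i] = \prod_(i < n) nat_of_bool (P i).
Proof.
have [/forallP allP | /forallPn [i notPi]] := boolP [forall i, P i].
  by rewrite big1 // => i _; rewrite allP.
by rewrite (bigD1 i) //= (negbTE notPi) mul0n.
Qed.

Lemma leq_vtot n (x : vec n) i : x i <= vtot x.
Proof. by rewrite /vtot (bigD1 i) //= leq_addr. Qed.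

Section ProductWeight.

Variables (n : nat) (h : vec n -> nat) (w : nat -> nat).
Hypothesis h_prod : forall m, h m = \prod_(i < n) w (m i).

Lemma hbinom_prod k x : hbinom h k x = \prod_(i < n) wcomp w k (x i).
Proof.
elim: k x => [|k IHk] x /=; first exact: nat_forallE.
set M := (vtot x).+1.
pose F i (j : 'I_M) := if j <= x i then w j * wcomp w k (x i - j) else 0.
have -> : \sum_(m : {ffun 'I_n -> 'I_M} | vle (fun i => m i) x)
            h (fun i => m i) * hbinom h k (fun i => x i - m i)
          = \sum_(m : {ffun 'I_n -> 'I_M}) \prod_(i < n) F i (m i).
  rewrite big_mkcond /=; apply: eq_bigr => m _.
  rewrite h_prod IHk -big_split /=.
  have [/forallP le_mx | /forallPn [i gt_mx]] := boolP (vle _ _).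
    by apply: eq_bigr => i _; rewrite /F le_mx.
  by rewrite (bigD1 i) //= /F (negbTE gt_mx) mul0n.
rewrite -bigA_distr_bigA /=; apply: eq_bigr => i _.
rewrite (big_ord_widen M (fun j => w j * wcomp w k (x i - j))); last first.
  by rewrite ltnS leq_vtot.
by rewrite [RHS]big_mkcond; apply: eq_bigr => j _; rewrite /F ltnS.
Qed.

Lemma comp_count_const c :
  comp_count h (vconst c) = \sum_(k < (n * c).+2) wcomp w k c ^ n.
Proof.
rewrite /comp_count /vtot /vconst sum_nat_const card_ord.
by apply: eq_bigr => k _; rewrite hbinom_prod prod_nat_const card_ord.
Qed.

End ProductWeight.

Lemma hockey_stick k n :
  \sum_(t < n.+1) 'C(t + k, k.*2.+1) = 'C(n + k.+1, k.*2.+2).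
Proof.
elim: n => [|n IHn]; first by rewrite big_ord1 /= !bin_small //; lia.
by rewrite big_ord_recr /= IHn addSnnS addSn binS.
Qed.

Lemma sum_mul_bin k n :
  \sum_(j < n.+1) j * 'C(n - j + k, k.*2.+1) = 'C(n + k.+1, k.*2.+3).
Proof.
elim: n => [|n IHn]; first by rewrite big_ord1 mul0n bin_small //; lia.
rewrite big_ord_recl mul0n add0n.
under eq_bigr => j _ do rewrite /bump /= subSS mulSn.
rewrite big_split /= IHn (reindex_inj rev_ord_inj) /=.
rewrite (eq_bigr (fun j : 'I_n.+1 => 'C(j + k, k.*2.+1))) => [|j _]; last first.
  by rewrite subSS subKn // -ltnS.
by rewrite hockey_stick addSn binS addnC.
Qed.

Lemma wcomp_id k n : wcomp id k.+1 n = 'C(n + k, k.*2.+1).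
Proof.
elim: k n => [|k IHk] n.
  rewrite /= addn0 big_ord_recr /= subnn muln1 big1 ?bin1 // => j _.
  by rewrite subn_eq0 leqNgt ltn_ord muln0.
rewrite wcompS; under eq_bigr => j _ do rewrite IHk.
exact: sum_mul_bin.
Qed.

Lemma wcomp_id_eq0 j n : n < j -> wcomp id j n = 0.
Proof. by case: j => // j lt_nj; rewrite wcomp_id bin_small //; lia. Qed.

Definition one_or_two (j : nat) : nat := (j == 1) || (j == 2).

(* A composition into parts 1 and 2 with k parts of sum n has exactly
   n - k parts equal to 2. *)
Lemma wcomp_one_or_two k n :
  wcomp one_or_two k n = if k <= n then 'C(k, n - k) else 0.
Proof.
elim: k n => [|k IHk] [|[|n]] //=; rewrite ?big_ord1 //.
  by rewrite big_ord_recl big_ord1 !IHk; case: k {IHk}.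
rewrite 3!big_ord_recl big1 ?addn0; last by case=> [[|[|[]]]].
rewrite !IHk /= mul0n add0n !mul1n !subSS !subn0 ltnS.
case: (ltngtP k n) {IHk} => [lt_kn | lt_nk | ->].
- by rewrite leqW ?subSn ?binS // ltnW.
- case: (ltnP n.+1 k) => [// | le_kn].
  have -> : k = n.+1 by lia.
  by rewrite subnn !bin0.
- by rewrite leqnSn subSn // subnn bin0 bin1.
Qed.

Lemma wcomp_one_or_two_eq0 k n :
  ~~ (k <= n <= k.*2) -> wcomp one_or_two k n = 0.
Proof.
rewrite wcomp_one_or_two negb_and -ltnNge; case: ifP => // le_kn /= lt_n_2k.
by rewrite bin_small //; lia.
Qed.

Lemma wcomp_id_shift l j : 0 < l ->
  wcomp id j l = wcomp one_or_two (j + l.-1) l.*2.-1.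
Proof.
move=> l_gt0; rewrite wcomp_one_or_two.
case: j => [|j].
  by rewrite /= ifT ?bin_small ?gtn_eqF //; lia.
rewrite wcomp_id; have -> : j.+1 + l.-1 = l + j by lia.
case: (ltnP j l) => [lt_jl | le_lj].
  rewrite ifT; last by lia.
  by rewrite -bin_sub; [congr 'C(_, _) |]; lia.
by rewrite ifF ?bin_small //; lia.
Qed.

Lemma sum_nat_support (F : nat -> nat) a b n :
  a <= b <= n -> (forall i, ~~ (a <= i < b) -> F i = 0) ->
  \sum_(i < n) F i = \sum_(a <= i < b) F i.
Proof.
move=> /andP[le_ab le_bn] F0.
rewrite -(big_mkord xpredT) (big_cat_nat (n := a)) ?(leq_trans le_ab) //=.
rewrite [X in _ + X](big_cat_nat (n := b)) //=.
rewrite [X in _ + (_ + X)]big1_seq ?[X in X + _]big1_seq ?add0n ?addn0 //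
  => i /andP[_]; rewrite mem_index_iota => /andP[lo_i hi_i]; apply: F0.
- by rewrite negb_and -ltnNge hi_i.
- by rewrite negb_and -leqNgt lo_i orbT.
Qed.

Theorem theorem16 (N : nat) (hN : 1 <= N) (l : nat) (hl : 0 < l) :
  comp_count (@f_prod N) (@vconst N l) =
  comp_count (@g_ind N) (@vconst N (2 * l - 1)).
Proof.
rewrite (@comp_count_const _ _ id) // (@comp_count_const _ _ one_or_two);
  last by move=> m; rewrite /g_ind nat_forallE.
have -> : 2 * l - 1 = l.*2.-1 by lia.
rewrite (@sum_nat_support (fun j => wcomp id j l ^ N) 0 l.+1); last first.
- by move=> j; rewrite ltnNge negbK => lt_lj; rewrite wcomp_id_eq0 ?exp0n.
- by have := leq_pmull l hN; lia.
rewrite [RHS](@sum_nat_support (fun k => wcomp one_or_two k l.*2.-1 ^ N)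
           l.-1 (l.+1 + l.-1)); last first.
- move=> k out_k; rewrite wcomp_one_or_two_eq0 ?exp0n //.
  by apply: contra out_k; lia.
- by have := leq_pmull l.*2.-1 hN; lia.
rewrite -{1}[l.-1]add0n big_addn addnK.
by apply: eq_big_nat => j _; rewrite wcomp_id_shift.
Qed.
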